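(* Let $0<\mu<L$, $q=\mu/L$, and define $A_0=0$, $A_{k+1}=\frac{(1+q)A_k+2\big(1+\sqrt{(1+A_k)(1+qA_k)}\big)}{(1-q)^2}$, $\beta_k=\frac{A_k}{(1-q)A_{k+1}}$, $\delta_k=\sqrt{\frac{A_{k+1}}{1+qA_{k+1}}}$ and $\sigma_k=\sqrt{(1+A_k)(1+qA_k)}$. Then, as $k\to\infty$: $A_k\to\infty$; $A_k/A_{k+1}\to(1-\sqrt q)^2$; $\beta_k\to\frac{1-\sqrt q}{1+\sqrt q}$; $\delta_k\to\frac1{\sqrt q}$; $\sigma_k/A_k\to\sqrt q$; and $\sigma_k/A_{k+1}\to\sqrt q(1-\sqrt q)^2$. *)

From Stdlib Require Import Reals.
Open Scope R_scope.

Fixpoint A_seq (q : R) (k : nat) : R :=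
  match k with
  | O => 0
  | S k' => let a := A_seq q k' in
      ((1 + q) * a + 2 * (1 + sqrt ((1 + a) * (1 + q * a)))) / (1 - q) ^ 2
  end.

Definition beta_seq (q : R) (k : nat) : R :=
  A_seq q k / ((1 - q) * A_seq q (S k)).

Definition delta_seq (q : R) (k : nat) : R :=
  sqrt (A_seq q (S k) / (1 + q * A_seq q (S k))).

Definition sigma_seq (q : R) (k : nat) : R :=
  sqrt ((1 + A_seq q k) * (1 + q * A_seq q k)).

From Stdlib Require Import Reals Lra.
From Coquelicot Require Import Coquelicot.
Open Scope R_scope.

(* Since (1 - q)^2 <= 1, each step adds at least 2 to A_k, so A_k -> oo.
   Dividing the recursion by A_k, and writing
   sigma_k / A_k = sqrt ((1/A_k + 1) (1/A_k + q)) -> sqrt q, gives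
   A_{k+1} / A_k -> (1 + q + 2 sqrt q) / (1 - q)^2 = 1 / (1 - sqrt q)^2;
   every other limit is a continuous function of these two. *)

Lemma le_div_r x d : 0 <= x -> 0 < d <= 1 -> x <= x / d.
Proof.
  intros Hx Hd. apply (Rmult_le_reg_r d); [lra|].
  field_simplify; [|lra]. nra.
Qed.

Lemma sqrt_affine_prod_factor q a : 0 <= q -> 0 < a ->
  sqrt ((1 + a) * (1 + q * a)) = sqrt ((/ a + 1) * (/ a + q)) * a.
Proof.
  intros Hq Ha.
  assert (Hia := Rinv_0_lt_compat _ Ha).
  replace ((1 + a) * (1 + q * a)) with (((/ a + 1) * (/ a + q)) * (a * a))
    by (field; lra).
  rewrite sqrt_mult_alt by nra.
  rewrite sqrt_square; lra.
Qed.

Section Asymptotics.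

Variable q : R.
Hypothesis Hq : 0 < q < 1.

Local Notation A := (A_seq q).

Lemma A_seq_succ k : A (S k) =
  ((1 + q) * A k + 2 * (1 + sqrt ((1 + A k) * (1 + q * A k)))) / (1 - q) ^ 2.
Proof. reflexivity. Qed.

Lemma sqrt_q_bounds : 0 < sqrt q < 1.
Proof.
  split; [apply sqrt_lt_R0; lra|].
  rewrite <- sqrt_1. apply sqrt_lt_1; lra.
Qed.

Lemma sqrt_q_square : sqrt q * sqrt q = q.
Proof. apply sqrt_sqrt. lra. Qed.

Lemma one_sub_q_factor : 1 - q = (1 - sqrt q) * (1 + sqrt q).
Proof. pose proof sqrt_q_square. nra. Qed.

Lemma one_add_q_add_2sqrt : 1 + q + 2 * sqrt q = (1 + sqrt q) ^ 2.
Proof. pose proof sqrt_q_square. nra. Qed.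

Lemma A_seq_ge_2k k : 2 * INR k <= A k.
Proof.
  induction k as [|k IH]; [simpl; lra|].
  rewrite A_seq_succ, S_INR.
  assert (HA : 0 <= A k) by (pose proof (pos_INR k); lra).
  assert (Hs := sqrt_pos ((1 + A k) * (1 + q * A k))).
  assert (Hd : 0 < (1 - q) ^ 2 <= 1) by (split; nra).
  assert (Hx : 0 <= (1 + q) * A k + 2 * (1 + sqrt ((1 + A k) * (1 + q * A k))))
    by nra.
  assert (HX : 2 * (INR k + 1) <= (1 + q) * A k + 2 * (1 + sqrt ((1 + A k) * (1 + q * A k))))
    by nra.
  pose proof (le_div_r _ _ Hx Hd). lra.
Qed.

Lemma A_seq_S_pos k : 0 < A (S k).
Proof.
  pose proof (A_seq_ge_2k (S k)) as H. rewrite S_INR in H.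
  pose proof (pos_INR k). lra.
Qed.

Lemma A_seq_lim : is_lim_seq A p_infty.
Proof.
  apply is_lim_seq_le_p_loc with (u := INR); [|exact is_lim_seq_INR].
  exists 0%nat. intros n _.
  pose proof (A_seq_ge_2k n). pose proof (pos_INR n). lra.
Qed.

Lemma A_seq_inv_lim : is_lim_seq (fun k => / A k) 0.
Proof.
  apply (is_lim_seq_incr_1 (fun k => / A k)).
  pose proof (is_lim_seq_inv _ _ (proj1 (is_lim_seq_incr_1 _ _) A_seq_lim))
    as H.
  apply H. discriminate.
Qed.

Lemma sigma_seq_div_A_lim : is_lim_seq (fun k => sigma_seq q k / A k) (sqrt q).
Proof.
  apply (is_lim_seq_incr_1 (fun k => sigma_seq q k / A k)).
  apply is_lim_seq_ext with
    (u := fun k => sqrt ((/ A (S k) + 1) * (/ A (S k) + q))).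
  { intros k. pose proof (A_seq_S_pos k).
    unfold sigma_seq. rewrite sqrt_affine_prod_factor by lra. field. lra. }
  replace (sqrt q) with (sqrt ((0 + 1) * (0 + q))) by (f_equal; ring).
  apply is_lim_seq_continuous; [apply continuity_pt_sqrt; nra|].
  pose proof (proj1 (is_lim_seq_incr_1 _ _) A_seq_inv_lim) as Hinv.
  apply is_lim_seq_mult'; apply is_lim_seq_plus'; auto; apply is_lim_seq_const.
Qed.

Lemma A_seq_S_div k : 0 < A k ->
  A (S k) / A k = (1 + q + 2 * / A k + 2 * (sigma_seq q k / A k)) / (1 - q) ^ 2.
Proof.
  intros HA. rewrite A_seq_succ. unfold sigma_seq. field. split; lra.
Qed.

Lemma A_seq_growth_lim :
  is_lim_seq (fun k => A (S k) / A k) (1 / (1 - sqrt q) ^ 2).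
Proof.
  pose proof sqrt_q_bounds.
  apply (is_lim_seq_incr_1 (fun k => A (S k) / A k)).
  apply is_lim_seq_ext with (u := fun k =>
    (1 + q + 2 * / A (S k) + 2 * (sigma_seq q (S k) / A (S k))) / (1 - q) ^ 2).
  { intros k. symmetry. apply A_seq_S_div, A_seq_S_pos. }
  replace (1 / (1 - sqrt q) ^ 2)
    with ((1 + q + 2 * 0 + 2 * sqrt q) / (1 - q) ^ 2).
  2:{ rewrite Rmult_0_r, Rplus_0_r, one_add_q_add_2sqrt, one_sub_q_factor.
      field. split; lra. }
  apply is_lim_seq_div'; [|apply is_lim_seq_const|nra].
  apply is_lim_seq_plus'; [apply is_lim_seq_plus'|];
    [apply is_lim_seq_const| |]; apply is_lim_seq_mult'; try apply is_lim_seq_const.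
  - exact (proj1 (is_lim_seq_incr_1 _ _) A_seq_inv_lim).
  - exact (proj1 (is_lim_seq_incr_1 _ _) sigma_seq_div_A_lim).
Qed.

Lemma A_seq_ratio_lim :
  is_lim_seq (fun k => A k / A (S k)) ((1 - sqrt q) ^ 2).
Proof.
  pose proof sqrt_q_bounds.
  apply (is_lim_seq_incr_1 (fun k => A k / A (S k))).
  apply is_lim_seq_ext with (u := fun k => 1 / (A (S (S k)) / A (S k))).
  { intros k. pose proof (A_seq_S_pos k). pose proof (A_seq_S_pos (S k)).
    field. lra. }
  replace ((1 - sqrt q) ^ 2) with (1 / (1 / (1 - sqrt q) ^ 2)) by (field; lra).
  apply is_lim_seq_div'; [apply is_lim_seq_const| |].
  - exact (proj1 (is_lim_seq_incr_1 _ _) A_seq_growth_lim).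
  - apply Rgt_not_eq, Rdiv_lt_0_compat; nra.
Qed.

Lemma beta_seq_lim :
  is_lim_seq (beta_seq q) ((1 - sqrt q) / (1 + sqrt q)).
Proof.
  pose proof sqrt_q_bounds.
  apply is_lim_seq_ext with (u := fun k => (A k / A (S k)) / (1 - q)).
  { intros k. unfold beta_seq. pose proof (A_seq_S_pos k). field. lra. }
  replace ((1 - sqrt q) / (1 + sqrt q)) with ((1 - sqrt q) ^ 2 / (1 - q)).
  2:{ rewrite one_sub_q_factor. field. lra. }
  apply is_lim_seq_div'; [exact A_seq_ratio_lim|apply is_lim_seq_const|lra].
Qed.

Lemma delta_seq_lim : is_lim_seq (delta_seq q) (1 / sqrt q).
Proof.
  apply is_lim_seq_ext with (u := fun k => sqrt (1 / (/ A (S k) + q))).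
  { intros k. unfold delta_seq. pose proof (A_seq_S_pos k).
    f_equal. field. split; nra. }
  replace (1 / sqrt q) with (sqrt (1 / (0 + q))).
  2:{ rewrite Rplus_0_l, sqrt_div_alt, sqrt_1; lra. }
  apply is_lim_seq_continuous.
  { apply continuity_pt_sqrt, Rlt_le, Rdiv_lt_0_compat; lra. }
  apply is_lim_seq_div'; [apply is_lim_seq_const| |lra].
  apply is_lim_seq_plus'; [|apply is_lim_seq_const].
  exact (proj1 (is_lim_seq_incr_1 _ _) A_seq_inv_lim).
Qed.

Lemma sigma_seq_div_A_S_lim :
  is_lim_seq (fun k => sigma_seq q k / A (S k)) (sqrt q * (1 - sqrt q) ^ 2).
Proof.
  apply (is_lim_seq_incr_1 (fun k => sigma_seq q k / A (S k))).
  apply is_lim_seq_ext with (u := fun k =>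
    (sigma_seq q (S k) / A (S k)) * (A (S k) / A (S (S k)))).
  { intros k. pose proof (A_seq_S_pos k). pose proof (A_seq_S_pos (S k)).
    field. lra. }
  apply is_lim_seq_mult'.
  - exact (proj1 (is_lim_seq_incr_1 _ _) sigma_seq_div_A_lim).
  - exact (proj1 (is_lim_seq_incr_1 _ _) A_seq_ratio_lim).
Qed.

End Asymptotics.

Theorem lemma4 (mu L : R) (Hmu : 0 < mu) (HmuL : mu < L) :
  let q := mu / L in
  cv_infty (A_seq q) /\
  Un_cv (fun k => A_seq q k / A_seq q (S k)) ((1 - sqrt q) ^ 2) /\
  Un_cv (beta_seq q) ((1 - sqrt q) / (1 + sqrt q)) /\
  Un_cv (delta_seq q) (1 / sqrt q) /\
  Un_cv (fun k => sigma_seq q k / A_seq q k) (sqrt q) /\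
  Un_cv (fun k => sigma_seq q k / A_seq q (S k)) (sqrt q * (1 - sqrt q) ^ 2).
Proof.
  intros q.
  assert (Hq : 0 < q < 1).
  { unfold q; split; [apply Rdiv_lt_0_compat; lra|].
    apply (Rmult_lt_reg_r L); [lra|]. field_simplify; lra. }
  repeat split; [apply is_lim_seq_p_infty_Reals, A_seq_lim; exact Hq| ..];
    apply is_lim_seq_Reals.
  - exact (A_seq_ratio_lim q Hq).
  - exact (beta_seq_lim q Hq).
  - exact (delta_seq_lim q Hq).
  - exact (sigma_seq_div_A_lim q Hq).
  - exact (sigma_seq_div_A_S_lim q Hq).
Qed.
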